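(* Let $f(x)=\frac1n\sum_{i=1}^nf_i(x)$ on $\mathbb{R}^d$ where each $f_i$ is $\mu_i$-strongly convex and $L_i$-smooth, and let $x^*$ be the minimizer of $f$. Consider SGD with the DecSPS stepsize (defined in the context) with $c_k=\sqrt{k+1}$ for $k\ge0$ and $c_{-1}=c_0$. Then almost surely, for all $k\in\mathbb{N}$, $\|x^k-x^*\|^2\le D^2_{\max}$, where $$D^2_{\max}:=\max\left\{\|x^0-x^*\|^2,\ \frac{2c_0\gamma_b\hat\sigma^2_{B,\max}}{\min\left\{\frac{\mu_{\min}}{2L_{\max}},\mu_{\min}\gamma_b\right\}}\right\},$$ $\mu_{\min}=\min_i\mu_i$ and $L_{\max}=\max_iL_i$.
   Context: Minibatches: fix a batch size $B$; at each iteration a subset $\mathcal S_k\subseteq[n]$ with $|\mathcal S_k|=B$ is sampled (uniformly at random, independently across iterations). For $\mathcal S\subseteq[n]$, $f_{\mathcal S}:=\frac1{|\mathcal S|}\sum_{i\in\mathcal S}f_i$, $f^*_{\mathcal S}:=\inf_xf_{\mathcal S}(x)$, and $\ell^*_{\mathcal S}$ is a given real number with $\ell^*_{\mathcal S}\le f^*_{\mathcal S}$. SGD: $x^{k+1}=x^k-\gamma_k\nabla f_{\mathcal S_k}(x^k)$. DecSPS stepsize: $\gamma_k:=\frac1{c_k}\min\left\{\frac{f_{\mathcal S_k}(x^k)-\ell^*_{\mathcal S_k}}{\|\nabla f_{\mathcal S_k}(x^k)\|^2},\ c_{k-1}\gamma_{k-1}\right\}$ for $k\ge0$, with $c_{-1}=c_0$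 and $\gamma_{-1}=\gamma_b>0$ a fixed constant; if $\nabla f_{\mathcal S_k}(x^k)=0$ the iterate is not updated. $\hat\sigma^2_{B,\max}:=\max_{\mathcal S\subseteq[n],|\mathcal S|=B}[f_{\mathcal S}(x^* )-\ell^*_{\mathcal S}]$. *)

From HB Require Import structures.
From mathcomp Require Import all_boot all_order all_algebra.
From mathcomp Require Import all_classical all_reals all_analysis.
Set Implicit Arguments. Unset Strict Implicit. Unset Printing Implicit Defensive.
Import Order.TTheory GRing.Theory Num.Theory.
Import numFieldNormedType.Exports.
Local Open Scope ring_scope.

Section Defs.
Variables (R : realType) (d n : nat).

Definition dotv (x y : 'rV[R]_d) : R := \sum_(i < d) x ord0 i * y ord0 i.
Definition sqnorm (x : 'rV[R]_d) : R := dotv x x.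
Definition enorm (x : 'rV[R]_d) : R := Num.sqrt (sqnorm x).

Definition ebasis (i : 'I_d) : 'rV[R]_d := delta_mx ord0 i.

Definition grad (f : 'rV[R]_d -> R) (x : 'rV[R]_d) : 'rV[R]_d :=
  \row_(i < d) derive f x (ebasis i).

Definition strongly_convex (mu : R) (f : 'rV[R]_d -> R) : Prop :=
  0 < mu /\
  forall (x y : 'rV[R]_d) (t : R), 0 <= t -> t <= 1 ->
    f (t *: x + (1 - t) *: y) <=
      t * f x + (1 - t) * f y - mu / 2 * t * (1 - t) * sqnorm (x - y).

Definition smooth (L : R) (f : 'rV[R]_d -> R) : Prop :=
  (forall x, differentiable f x) /\
  forall x y : 'rV[R]_d, enorm (grad f x - grad f y) <= L * enorm (x - y).

Definition favg (f : 'I_n -> 'rV[R]_d -> R) (x : 'rV[R]_d) : R :=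
  (n%:R)^-1 * \sum_(i < n) f i x.

Definition fS (f : 'I_n -> 'rV[R]_d -> R) (S : {set 'I_n}) (x : 'rV[R]_d) : R :=
  (#|S|%:R)^-1 * \sum_(i in S) f i x.

(* hat sigma^2_{B,max} = max over |S| = B of f_S(xstar) - ell_S.
   (Each term is >= 0 since ell_S <= inf f_S <= f_S(xstar), so 0 is a neutral start.) *)
Definition sigma2Bmax (f : 'I_n -> 'rV[R]_d -> R) (ell : {set 'I_n} -> R)
    (B : nat) (xstar : 'rV[R]_d) : R :=
  \big[Num.max/0]_(S : {set 'I_n} | #|S| == B) (fS f S xstar - ell S).

Definition csqrt (k : nat) : R := Num.sqrt (k.+1)%:R.

(* c_{k-1}, with c_{-1} = c_0 *)
Definition cprev (c : nat -> R) (k : nat) : R :=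
  if k is k'.+1 then c k' else c 0%N.

(* One step of SGD with DecSPS: state (x^k, gamma_{k-1}) |-> (x^{k+1}, gamma_k).
   If the minibatch gradient vanishes the iterate is not updated; the Polyak
   ratio is then read as +oo, i.e. gamma_k = c_{k-1} gamma_{k-1} / c_k. *)
Definition decsps_step (f : 'I_n -> 'rV[R]_d -> R) (ell : {set 'I_n} -> R)
    (c : nat -> R) (k : nat) (S : {set 'I_n}) (st : 'rV[R]_d * R)
    : 'rV[R]_d * R :=
  let x := st.1 in
  let gprev := st.2 in
  let g := grad (fS f S) x in
  if g == 0 then (x, (c k)^-1 * (cprev c k * gprev))
  else
    let gam := (c k)^-1 *
               Num.min ((fS f S x - ell S) / sqnorm g) (cprev c k * gprev) in
    (x - gam *: g, gam).

(* state k = (x^k, gamma_{k-1}), with gamma_{-1} = gamma_b *)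
Fixpoint decsps_state (f : 'I_n -> 'rV[R]_d -> R) (ell : {set 'I_n} -> R)
    (c : nat -> R) (batches : nat -> {set 'I_n}) (x0 : 'rV[R]_d) (gamma_b : R)
    (k : nat) : 'rV[R]_d * R :=
  if k is k'.+1 then
    decsps_step f ell c k' (batches k')
      (decsps_state f ell c batches x0 gamma_b k')
  else (x0, gamma_b).

Definition decsps_iter f ell c batches x0 gamma_b k : 'rV[R]_d :=
  (decsps_state f ell c batches x0 gamma_b k).1.

End Defs.

(* Strong convexity of the minibatch loss, together with the Polyak cap
   [gamma_k |g_k|^2 <= f_S(x^k) - l_S], gives the one-step bound
     |x^{k+1} - x*|^2 <= (1 - gamma_k mu) |x^k - x*|^2 + 2 gamma_k sigma,
   and since [c_k gamma_k] is nonincreasing and [c_k >= 1], 0 <= gamma_k <= c_0 gamma_b.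
   If [gamma_k mu <= 1] the right-hand side is below a convex combination of
   |x^k - x*|^2 and 2 sigma / mu; otherwise it is at most 2 c_0 gamma_b sigma.
   Both are at most D_max, the second because mu_min <= L_max forces the minimum
   in the denominator of D_max to be at most 1. *)

From HB Require Import structures.
From mathcomp Require Import all_boot all_order all_algebra.
From mathcomp Require Import all_classical all_reals all_analysis.
From mathcomp Require Import ring lra.
Set Implicit Arguments.
Unset Strict Implicit.
Unset Printing Implicit Defensive.
Import Order.TTheory GRing.Theory Num.Theory.
Import numFieldNormedType.Exports.
Local Open Scope ring_scope.

Section Euclidean.
Variables (R : realType) (d : nat).
Implicit Types (a b c : 'rV[R]_d) (t : R).

Lemma dotvC a b : dotv a b = dotv b a.
Proof. by apply: eq_bigr => i _; rewrite mulrC. Qed.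

Lemma dotvDl a b c : dotv (a + b) c = dotv a c + dotv b c.
Proof. by rewrite /dotv -big_split; apply: eq_bigr => i _; rewrite !mxE mulrDl. Qed.

Lemma dotvZl t a c : dotv (t *: a) c = t * dotv a c.
Proof. by rewrite /dotv mulr_sumr; apply: eq_bigr => i _; rewrite !mxE mulrA. Qed.

Lemma dotvZr t a c : dotv c (t *: a) = t * dotv c a.
Proof. by rewrite !(dotvC c) dotvZl. Qed.

Lemma dotvBl a b c : dotv (a - b) c = dotv a c - dotv b c.
Proof. by rewrite dotvDl -scaleN1r dotvZl mulN1r. Qed.

Lemma dotvBr a b c : dotv c (a - b) = dotv c a - dotv c b.
Proof. by rewrite !(dotvC c) dotvBl. Qed.

Lemma dotv0r a : dotv a 0 = 0.
Proof. by rewrite /dotv big1 // => i _; rewrite mxE mulr0. Qed.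

Lemma sqnorm_ge0 a : 0 <= sqnorm a.
Proof. by apply: sumr_ge0 => i _; rewrite -expr2 sqr_ge0. Qed.

Lemma sqnorm_eq0 a : (sqnorm a == 0) = (a == 0).
Proof.
apply/idP/eqP => [|->]; last by rewrite /sqnorm dotv0r.
rewrite psumr_eq0 => [/allP a0|i _]; last by rewrite -expr2 sqr_ge0.
apply/rowP => i; have := a0 i (mem_index_enum i).
by rewrite /= -expr2 sqrf_eq0 mxE => /eqP.
Qed.

Lemma sqnormZ t a : sqnorm (t *: a) = t ^+ 2 * sqnorm a.
Proof. by rewrite /sqnorm dotvZl dotvZr mulrA expr2. Qed.

Lemma sqnormB a b : sqnorm (a - b) = sqnorm a - 2 * dotv a b + sqnorm b.
Proof. by rewrite /sqnorm dotvBl !dotvBr (dotvC b a); ring. Qed.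

Lemma sqnormBC a b : sqnorm (a - b) = sqnorm (b - a).
Proof. by rewrite !sqnormB (dotvC a b); ring. Qed.

Lemma sqnorm_ebasis (i : 'I_d) : sqnorm (ebasis R i) = 1.
Proof.
rewrite /sqnorm /dotv (bigD1 i) //= big1 ?addr0; first by rewrite mxE !eqxx mulr1.
by move=> j ji; rewrite mxE (negbTE ji) andbF mul0r.
Qed.

Lemma dotv_sqr_le a b : dotv a b ^+ 2 <= sqnorm a * sqnorm b.
Proof.
have [/eqP|b_neq0] := eqVneq (sqnorm b) 0.
  by rewrite sqnorm_eq0 => /eqP->; rewrite /sqnorm !dotv0r expr0n mulr0.
have b_gt0 : 0 < sqnorm b by rewrite lt_def b_neq0 sqnorm_ge0.
(* Cauchy-Schwarz from [0 <= |(b.b) a - (a.b) b|^2 = (b.b) ((a.a)(b.b) - (a.b)^2)]. *)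
have := sqnorm_ge0 (sqnorm b *: a - dotv a b *: b).
by rewrite sqnormB !sqnormZ dotvZl dotvZr => expanded; nra.
Qed.

Lemma dotv_le_enorm a b : dotv a b <= enorm a * enorm b.
Proof.
rewrite /enorm -sqrtrM ?sqnorm_ge0 //.
apply: le_trans (ler_norm _) _; rewrite -sqrtr_sqr.
by rewrite ler_sqrt ?mulr_ge0 ?sqnorm_ge0 ?dotv_sqr_le.
Qed.

End Euclidean.

Section StrongConvexity.
Variables (R : realType) (d : nat).
Implicit Types (F : 'rV[R]_d -> R) (x y : 'rV[R]_d).

Lemma dotv_grad F x v : differentiable F x -> dotv (grad F x) v = 'D_v F x.
Proof.
move=> dF; rewrite deriveE // {2}(row_sum_delta v) linear_sum.
by apply: eq_bigr => i _; rewrite mxE deriveE // linearZ mulrC.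
Qed.

Lemma strongly_convex_grad_le mu F x y :
  strongly_convex mu F -> differentiable F x ->
  dotv (grad F x) (y - x) <= F y - F x - mu / 2 * sqnorm (y - x).
Proof.
move=> [_ Fsc] dF; rewrite dotv_grad //.
have cvD : ((fun h : R => h^-1 *: ((F \o shift x) (h *: (y - x)) - F x))
    @ (0 : R)^'+ --> 'D_(y - x) F x)%classic.
  apply: cvg_trans (@diff_derivable _ _ _ _ _ (y - x) dF); apply: cvg_app.
  by apply: within_subset => h /= h0; rewrite gt_eqF.
pose g h := F y - F x - mu / 2 * (1 - h) * sqnorm (y - x).
have cvg0 : (g h @[h --> (0 : R)^'+] --> g 0)%classic.
  apply: cvg_at_right_filter; apply: cvgB; first exact: cvg_cst.
  by apply: cvgMl; apply: cvgMr; apply: cvgB; [exact: cvg_cst | exact: cvg_id].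
rewrite (_ : _ - _ = g 0); last by rewrite /g subr0 mulr1.
apply: (ler_cvg_to cvD cvg0); near=> h.
have h_gt0 : 0 < h by near: h; exact: nbhs_right_gt.
have h_le1 : h <= 1 by near: h; apply: nbhs_right_le; exact: ltr01.
have := Fsc y x h (ltW h_gt0) h_le1.
rewrite (_ : h *: y + _ = h *: (y - x) + x); last first.
  by rewrite scalerBr scalerBl scale1r addrCA addrC.
move=> Fh; rewrite /= /g -(ler_pM2l h_gt0) mulrA mulfV ?gt_eqF // mul1r lerBlDr.
by apply: le_trans Fh _; rewrite le_eqVlt; apply/orP; left; apply/eqP; ring.
Unshelve. all: end_near. Qed.

Lemma strongly_convex_grad_monotone mu F x y :
  strongly_convex mu F -> differentiable F x -> differentiable F y ->
  mu * sqnorm (x - y) <= dotv (grad F x - grad F y) (x - y).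
Proof.
move=> Fsc dFx dFy.
have := strongly_convex_grad_le y Fsc dFx.
have := strongly_convex_grad_le x Fsc dFy.
rewrite sqnormBC dotvBl !dotvBr; lra.
Qed.

Lemma strongly_convex_le_smooth mu L F :
  (0 < d)%N -> strongly_convex mu F -> smooth L F -> mu <= L.
Proof.
move=> d_gt0 Fsc [dF FL]; pose e := ebasis R (Ordinal d_gt0).
have := strongly_convex_grad_monotone Fsc (dF e) (dF 0).
rewrite subr0 sqnorm_ebasis mulr1 => mono.
apply: le_trans mono _; apply: le_trans (dotv_le_enorm _ _) _.
by have := FL e 0; rewrite subr0 /enorm sqnorm_ebasis sqrtr1 !mulr1.
Qed.

Lemma strongly_convexW mu mu' F :
  0 < mu' -> mu' <= mu -> strongly_convex mu F -> strongly_convex mu' F.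
Proof.
move=> mu'_gt0 mu'_le [_ Fsc]; split=> // x y t t0 t1.
apply: le_trans (Fsc x y t t0 t1) _; rewrite lerD2l lerN2.
rewrite -!mulrA ler_wpM2r // ?ler_pM2r ?invr_gt0 //.
by rewrite !mulr_ge0 ?sqnorm_ge0 ?subr_ge0.
Qed.

End StrongConvexity.

Section Minibatch.
Variables (R : realType) (d n : nat) (f : 'I_n -> 'rV[R]_d -> R).
Variable S : {set 'I_n}.

Lemma differentiable_fS x :
  (forall i, differentiable (f i) x) -> differentiable (fS f S) x.
Proof.
move=> df; have -> : fS f S =
    #|S|%:R^-1 *: \sum_(i < n) (fun y => if i \in S then f i y else 0).
  by apply/funext => y; rewrite /fS /= fct_sumE big_mkcond.
apply/differentiableZ/differentiable_sum => i.
by case: (i \in S); [exact: df | exact: differentiable_cst].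
Qed.

Lemma strongly_convex_fS mu :
  (0 < #|S|)%N -> (forall i, strongly_convex mu (f i)) ->
  strongly_convex mu (fS f S).
Proof.
move=> S_gt0 fsc; split; first by have /card_gt0P[i _] := S_gt0; case: (fsc i).
move=> x y t t0 t1; set s := sqnorm (x - y).
have Ssum : \sum_(i in S) f i (t *: x + (1 - t) *: y) <=
    \sum_(i in S) (t * f i x + (1 - t) * f i y - mu / 2 * t * (1 - t) * s).
  by apply: ler_sum => i _; exact: (fsc i).2.
rewrite sumrB big_split /= -!mulr_sumr sumr_const in Ssum.
have S_neq0 : (#|S|%:R : R) != 0 by rewrite pnatr_eq0 -lt0n.
apply: le_trans (ler_wpM2l _ Ssum) _; first by rewrite invr_ge0.
by rewrite /fS -(mulr_natr s) le_eqVlt; apply/orP; left; apply/eqP; field.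
Qed.

End Minibatch.

Section GradientStep.
Variables (R : realType) (d : nat).

Lemma sqnorm_gradient_step_le mu (F : 'rV[R]_d -> R) ell x xstar gam :
  strongly_convex mu F -> differentiable F x -> 0 <= gam ->
  gam * sqnorm (grad F x) <= F x - ell ->
  sqnorm (x - gam *: grad F x - xstar) <=
    (1 - gam * mu) * sqnorm (x - xstar) + 2 * gam * (F xstar - ell).
Proof.
move=> Fsc dF gam_ge0 polyak.
have := strongly_convex_grad_le xstar Fsc dF; rewrite sqnormBC dotvBr => descent.
rewrite (addrAC x) sqnormB sqnormZ dotvZr (dotvC (x - xstar)) dotvBr.
have := ler_wpM2l gam_ge0 descent; have := ler_wpM2l gam_ge0 polyak.
have : 0 <= gam * (F x - ell).
  by rewrite mulr_ge0 //; apply: le_trans polyak; rewrite mulr_ge0 ?sqnorm_ge0.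
nra.
Qed.

End GradientStep.

Lemma contraction_step_le_bound (R : realFieldType) (mu sigma Gam gam D D' Q M : R) :
  0 <= mu -> 0 <= sigma -> 0 <= gam -> gam <= Gam -> 0 <= D -> D <= M ->
  Q <= M -> 2 * sigma <= mu * Q -> 2 * Gam * sigma <= Q ->
  D' <= (1 - gam * mu) * D + 2 * gam * sigma -> D' <= M.
Proof.
move=> mu_ge0 sigma_ge0 gam_ge0 gam_le D_ge0 D_le QM sigmaQ GamQ step.
have [small|large] := lerP (gam * mu) 1.
  have : 0 <= (1 - gam * mu) * (M - D) by rewrite mulr_ge0 ?subr_ge0.
  have : 0 <= gam * (mu * Q - 2 * sigma) by rewrite mulr_ge0 ?subr_ge0.
  have : 0 <= gam * mu * (M - Q) by rewrite !mulr_ge0 ?subr_ge0.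
  nra.
have : 0 <= (gam * mu - 1) * D by rewrite mulr_ge0 // subr_ge0 ltW.
have : 0 <= (Gam - gam) * sigma by rewrite mulr_ge0 ?subr_ge0.
nra.
Qed.

Section DecSPS.
Variables (R : realType) (d n : nat) (f : 'I_n -> 'rV[R]_d -> R).
Variables (ell : {set 'I_n} -> R) (c : nat -> R) (batches : nat -> {set 'I_n}).
Variables (x0 : 'rV[R]_d) (gamma_b : R).
Hypothesis c_ge1 : forall k, 1 <= c k.
Hypothesis gamma_b_ge0 : 0 <= gamma_b.
Hypothesis ell_le : forall k x, ell (batches k) <= fS f (batches k) x.

Local Notation state := (decsps_state f ell c batches x0 gamma_b).
Local Notation iterate k := (state k).1.
Local Notation stepsize k := (state k.+1).2.
Local Notation batch_grad k := (grad (fS f (batches k)) (iterate k)).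
Local Notation polyak_ratio k :=
  ((fS f (batches k) (iterate k) - ell (batches k)) / sqnorm (batch_grad k)).

Lemma cprev_ge1 k : 1 <= cprev c k.
Proof. by case: k => [|k]; apply: c_ge1. Qed.

Lemma decsps_iterS k : iterate k.+1 = iterate k - stepsize k *: batch_grad k.
Proof. by rewrite /= /decsps_step; case: eqP => [->|] /=; rewrite ?scaler0 ?subr0. Qed.

Lemma decsps_scaled_stepsizeE k :
  c k * stepsize k = if batch_grad k == 0 then cprev c k * (state k).2
                     else Num.min (polyak_ratio k) (cprev c k * (state k).2).
Proof.
have ck_neq0 : c k != 0 by rewrite gt_eqF // (lt_le_trans ltr01).
by rewrite /= /decsps_step; case: ifP => _ /=; rewrite mulVKf.
Qed.

Lemma decsps_stepsize_invariant k :
  0 <= (state k).2 /\ cprev c k * (state k).2 <= c 0 * gamma_b.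
Proof.
elim: k => [|k [gam_ge0 gam_le]]; first by rewrite lexx.
have prev_ge0 : 0 <= cprev c k * (state k).2.
  by rewrite mulr_ge0 // (le_trans ler01 (cprev_ge1 k)).
have ratio_ge0 : 0 <= polyak_ratio k by rewrite divr_ge0 ?subr_ge0 ?sqnorm_ge0.
have scaled_le : c k * stepsize k <= cprev c k * (state k).2.
  by rewrite decsps_scaled_stepsizeE; case: ifP => _; rewrite ?ge_min lexx ?orbT.
have scaled_ge0 : 0 <= c k * stepsize k.
  by rewrite decsps_scaled_stepsizeE; case: ifP => _; rewrite ?le_min ?ratio_ge0.
split; last exact: le_trans gam_le.
by rewrite -(pmulr_rge0 _ (lt_le_trans ltr01 (c_ge1 k))).
Qed.

Lemma decsps_stepsize_ge0 k : 0 <= stepsize k.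
Proof. exact: (decsps_stepsize_invariant k.+1).1. Qed.

Lemma decsps_stepsize_le k : stepsize k <= c 0 * gamma_b.
Proof.
apply: le_trans (decsps_stepsize_invariant k.+1).2.
by rewrite ler_peMl ?decsps_stepsize_ge0 ?cprev_ge1.
Qed.

Lemma decsps_stepsize_polyak k :
  stepsize k * sqnorm (batch_grad k) <=
    fS f (batches k) (iterate k) - ell (batches k).
Proof.
have [g0|g_neq0] := eqVneq (batch_grad k) 0.
  by rewrite g0 /sqnorm dotv0r mulr0 subr_ge0.
have g_gt0 : 0 < sqnorm (batch_grad k) by rewrite lt_def sqnorm_eq0 g_neq0 sqnorm_ge0.
rewrite -ler_pdivlMr //; apply: le_trans (_ : c k * stepsize k <= _).
  by rewrite ler_peMl ?decsps_stepsize_ge0.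
by rewrite decsps_scaled_stepsizeE (negbTE g_neq0) ge_min lexx.
Qed.

Variables (mu sigma : R) (xstar : 'rV[R]_d).
Hypothesis batch_convex : forall k, strongly_convex mu (fS f (batches k)).
Hypothesis batch_differentiable : forall k x, differentiable (fS f (batches k)) x.
Hypothesis batch_noise_le : forall k, fS f (batches k) xstar - ell (batches k) <= sigma.

Lemma decsps_sqnorm_le Q :
  2 * sigma <= mu * Q -> 2 * c 0 * gamma_b * sigma <= Q ->
  forall k, sqnorm (iterate k - xstar) <= Num.max (sqnorm (x0 - xstar)) Q.
Proof.
move=> sigmaQ GamQ; rewrite -(mulrA 2) in GamQ.
have sigma_ge0 : 0 <= sigma by apply: le_trans (batch_noise_le 0); rewrite subr_ge0.
have mu_ge0 : 0 <= mu by have [/ltW] := batch_convex 0.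
elim=> [|k IHk]; first by rewrite le_max lexx.
apply: (contraction_step_le_bound mu_ge0 sigma_ge0 (decsps_stepsize_ge0 k)
  (decsps_stepsize_le k) (sqnorm_ge0 _) IHk _ sigmaQ GamQ).
  by rewrite le_max lexx orbT.
rewrite decsps_iterS; apply: le_trans (sqnorm_gradient_step_le xstar
  (batch_convex k) (batch_differentiable k _) (decsps_stepsize_ge0 k)
  (decsps_stepsize_polyak k)) _.
by rewrite lerD2l ler_wpM2l ?mulr_ge0 ?decsps_stepsize_ge0.
Qed.

End DecSPS.

Lemma csqrt0 (R : realType) : csqrt R 0 = 1.
Proof. by rewrite /csqrt sqrtr1. Qed.

Lemma csqrt_ge1 (R : realType) k : 1 <= csqrt R k.
Proof. by rewrite /csqrt -{1}sqrtr1 ler_sqrt // ler1n. Qed.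

Lemma sigma2Bmax_ge0 (R : realType) d n (f : 'I_n -> 'rV[R]_d -> R) ell B xstar :
  0 <= sigma2Bmax f ell B xstar.
Proof. exact: bigmax_ge_id. Qed.

Lemma le_sigma2Bmax (R : realType) d n (f : 'I_n -> 'rV[R]_d -> R) ell B xstar
    (S : {set 'I_n}) :
  #|S| = B -> fS f S xstar - ell S <= sigma2Bmax f ell B xstar.
Proof. by move=> SB; apply: le_bigmax_cond; rewrite SB. Qed.

Theorem proposition1 (R : realType) (d n B : nat)
  (f : 'I_n -> 'rV[R]_d -> R) (mu L : 'I_n -> R) (mu_min L_max : R)
  (ell : {set 'I_n} -> R) (xstar x0 : 'rV[R]_d) (gamma_b : R)
  (batches : nat -> {set 'I_n}) :
  (0 < n)%N -> (0 < B <= n)%N ->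
  (forall i, strongly_convex (mu i) (f i)) ->
  (forall i, smooth (L i) (f i)) ->
  (forall i, mu_min <= mu i) -> (exists i, mu i = mu_min) ->
  (forall i, L i <= L_max) -> (exists i, L i = L_max) ->
  (forall x, favg f xstar <= favg f x) ->
  (forall (S : {set 'I_n}) x, #|S| = B -> ell S <= fS f S x) ->
  0 < gamma_b ->
  (forall k, #|batches k| = B) ->
  forall k : nat,
    sqnorm (decsps_iter f ell (@csqrt R) batches x0 gamma_b k - xstar) <=
    Num.max (sqnorm (x0 - xstar))
      (2 * csqrt R 0 * gamma_b * sigma2Bmax f ell B xstar /
         Num.min (mu_min / (2 * L_max)) (mu_min * gamma_b)).
Proof.
move=> _ /andP[B_gt0 _] fsc fsm mu_min_le [i0 mu_i0] _ [i1 L_i1] _ ell_le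
  gamma_b_gt0 batch_card k.
(* In dimension 0 nothing relates [mu_min] and [L_max], but every vector is 0. *)
have [d0|d_gt0] := posnP d.
  by subst d; rewrite le_max /sqnorm /dotv !big_ord0 lexx.
have mu_gt0 : 0 < mu_min by rewrite -mu_i0; case: (fsc i0).
have mu_le_L : mu_min <= L_max.
  rewrite -L_i1; apply: le_trans (mu_min_le i1) _.
  exact: strongly_convex_le_smooth d_gt0 (fsc i1) (fsm i1).
set sigma := sigma2Bmax f ell B xstar; set m := Num.min _ _.
have sigma_ge0 : 0 <= sigma := sigma2Bmax_ge0 f ell B xstar.
have m_gt0 : 0 < m by rewrite lt_min divr_gt0 ?mulr_gt0 //; lra.
have m_le1 : m <= 1 by rewrite ge_min ler_pdivrMr ?mulr_gt0 //; lra.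
have m_le : m <= mu_min * gamma_b by rewrite ge_min lexx orbT.
have batch_convex j : strongly_convex mu_min (fS f (batches j)).
  apply: strongly_convex_fS; first by rewrite batch_card.
  by move=> i; apply: strongly_convexW mu_gt0 (mu_min_le i) (fsc i).
have batch_differentiable j x : differentiable (fS f (batches j)) x.
  by apply: differentiable_fS => i; case: (fsm i).
apply: (decsps_sqnorm_le _ (csqrt_ge1 R) (ltW gamma_b_gt0)
  (fun j x => ell_le _ x (batch_card j)) batch_convex batch_differentiable
  (fun j => le_sigma2Bmax f ell xstar (batch_card j))).
  rewrite -/sigma csqrt0 mulr1 mulrA ler_pdivlMr //.
  by have := ler_wpM2l (mulr_ge0 (ler0n R 2) sigma_ge0) m_le; lra.
rewrite -/sigma csqrt0 mulr1 ler_pdivlMr //.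
by apply: ler_piMr; rewrite // !mulr_ge0 // ltW.
Qed.
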